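(* Let $R$ be a ring, $\mathfrak a\in\mathrm{Ass}_l(R)$, $S\in\mathrm{Den}_l(R,\mathfrak a)$ and $A=S^{-1}R$. Then $A=Q_{\mathfrak a}(R)$ (i.e. the natural ring homomorphism $S^{-1}R\to S_{\mathfrak a}(R)^{-1}R$, $s^{-1}r\mapsto s^{-1}r$, is an isomorphism) if and only if $Q_l(A)=A$ (i.e. the natural embedding $A\to Q_l(A)$ is an isomorphism).
   Context: Rings are associative with $1$. A multiplicatively closed subset $S$ ($1\in S$, $0\notin S$) is a left Ore set if $Sr\cap Rs\ne\emptyset$ for all $r\in R,s\in S$; $\mathrm{ass}(S):=\{r\mid sr=0\text{ for some }s\in S\}$; it is a left denominator set if moreover $rs=0$ ($s\in S$) implies $tr=0$ for some $t\in S$. $\mathrm{Den}_l(R)$ is the set of left denominator sets, $\mathrm{Ass}_l(R)=\{\mathrm{ass}(S)\mid S\in\mathrm{Den}_l(R)\}$, $\mathrm{Den}_l(R,\mathfrak a)=\{S\mid\mathrm{ass}(S)=\mathfrak a\}$; $S_{\mathfrak a}(R)$ is the largest element of $\mathrm{Den}_l(R,\mathfrak a)$ and $Q_{\mathfrak a}(R):=S_{\mathfrak a}(R)^{-1}R$. For a ring $B$, $Q_l(B):=S_0(B)^{-1}B$ where $S_0(B)$ is the largest element of $\mathrm{Den}_l(B,0)$. *)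

From HB Require Import structures.
From mathcomp Require Import all_boot all_order all_algebra.
Set Implicit Arguments. Unset Strict Implicit. Unset Printing Implicit Defensive.
Import GRing.Theory.
Local Open Scope ring_scope.

Definition mult_closed (R : nzRingType) (S : R -> Prop) : Prop :=
  S 1 /\ ~ S 0 /\ (forall s t, S s -> S t -> S (s * t)).

Definition left_ore (R : nzRingType) (S : R -> Prop) : Prop :=
  forall r s, S s -> exists s' r', S s' /\ s' * r = r' * s.

Definition ass (R : nzRingType) (S : R -> Prop) (r : R) : Prop :=
  exists s, S s /\ s * r = 0.

Definition left_den (R : nzRingType) (S : R -> Prop) : Prop :=
  [/\ mult_closed S, left_ore S &
      forall r s, S s -> r * s = 0 -> exists t, S t /\ t * r = 0].

Definition den_l_at (R : nzRingType) (a : R -> Prop) (S : R -> Prop) : Prop :=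
  left_den S /\ (forall r, ass S r <-> a r).

Definition largest_den (R : nzRingType) (a : R -> Prop) (T : R -> Prop) : Prop :=
  den_l_at a T /\
  (forall S', den_l_at a S' -> forall x, S' x -> T x).

Definition zero_ideal (R : nzRingType) (r : R) : Prop := r = 0.

(* sigma : R -> A is a left localization of R at the left denominator set S,
   i.e. (A, sigma) is (a model of) the left ring of fractions S^{-1}R:
   sigma(S) consists of units, every element is sigma(s)^{-1} sigma(r),
   and ker sigma = ass(S). *)
Definition left_localization (R A : nzRingType) (S : R -> Prop)
    (sigma : {rmorphism R -> A}) : Prop :=
  [/\ forall s, S s -> exists u, u * sigma s = 1 /\ sigma s * u = 1,
      forall x : A, exists s r, S s /\ sigma s * x = sigma r &
      forall r, sigma r = 0 <-> ass S r].

From HB Require Import structures.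
From mathcomp Require Import all_boot all_order all_algebra.
From Stdlib Require Import IndefiniteDescription.
Set Implicit Arguments. Unset Strict Implicit.
Local Open Scope ring_scope.
Import GRing.Theory.

(* For any ring A, the units form a left denominator set with ass = 0, so they
   lie in S_0(A), and Q_l(A) = A exactly when S_0(A) consists of units.
   If S^{-1}R ~ Q_a(R), the preimage of S_0(A) under R -> A is a left
   denominator set with ass = a, hence contained in S_a(R), whose image in
   Q_a(R) = A consists of units; so S_0(A) consists of units.  Conversely the
   universal property gives an injective map A -> Q_a(R) = T^{-1}R; the
   preimage in A of the units of Q_a(R) is a left denominator set with
   ass = 0, so it consists of units of A, and every fraction t^{-1} r of
   Q_a(R) then comes from A. *)

Definition invertible (X : nzRingType) (a : X) := exists u, u * a = 1 /\ a * u = 1.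

Section Invertible.
Variable X : nzRingType.
Implicit Types a b y z : X.

Lemma invertible1 : invertible (1 : X).
Proof. by exists 1; rewrite mulr1. Qed.

Lemma invertible0 : ~ invertible (0 : X).
Proof. by move=> [u [+ _]]; rewrite mulr0 => /eqP; rewrite eq_sym oner_eq0. Qed.

Lemma invertible_lcancel a y z : invertible a -> a * y = a * z -> y = z.
Proof. by move=> [u [ua _]] e; rewrite -[y]mul1r -[z]mul1r -ua -!mulrA e. Qed.

Lemma invertibleM a b : invertible a -> invertible b -> invertible (a * b).
Proof.
move=> [u [ua au]] [v [vb bv]]; exists (v * u); split.
  by rewrite mulrA -(mulrA v) ua mulr1 vb.
by rewrite mulrA -(mulrA a) bv mulr1 au.
Qed.

Lemma invertibleMl a b : invertible b -> invertible (a * b) -> invertible a.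
Proof.
move=> [v [vb bv]] ab_inv; have -> : a = a * b * v by rewrite -mulrA bv mulr1.
by apply: invertibleM => //; exists b.
Qed.

Lemma invertibleMr a b : invertible a -> invertible (a * b) -> invertible b.
Proof.
move=> [u [ua au]] ab_inv; have -> : b = u * (a * b) by rewrite mulrA ua mul1r.
by apply: invertibleM => //; exists a.
Qed.

End Invertible.

Lemma bij_rmorph_invertible (A B : nzRingType) (h : {rmorphism A -> B}) (a : A) :
  bijective h -> invertible (h a) -> invertible a.
Proof.
move=> [k hK kK] [v [va av]]; have h_inj := can_inj hK.
by exists (k v); split; apply: h_inj; rewrite rmorphM kK ?va ?av rmorph1.
Qed.

Lemma inj_surj_bijective (A B : Type) (h : A -> B) :
  injective h -> (forall y, exists x, h x = y) -> bijective h.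
Proof.
move=> h_inj h_surj.
pose k y := proj1_sig (constructive_indefinite_description _ (h_surj y)).
have hK y : h (k y) = y by rewrite /k; case: constructive_indefinite_description.
by exists k => [x|y]; [apply: h_inj; rewrite hK | apply: hK].
Qed.

Section LeftDenominatorSet.
Variables (R : nzRingType) (S : R -> Prop).
Hypothesis HS : left_den S.

Lemma left_den1 : S 1.
Proof. by case: HS => [[]]. Qed.

Lemma left_den_neq0 : ~ S 0.
Proof. by case: HS => [[_ []]]. Qed.

Lemma left_denM s t : S s -> S t -> S (s * t).
Proof. by case: HS => [[_ [_ SM]] _ _]; apply: SM. Qed.

Lemma left_den_ore r s : S s -> exists s' r', S s' /\ s' * r = r' * s.
Proof. by case: HS => [_ ore _]; apply: ore. Qed.

Lemma left_den_ass r s : S s -> r * s = 0 -> ass S r.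
Proof. by case: HS => [_ _ rev]; apply: rev. Qed.

Variables (X : nzRingType) (f : {rmorphism R -> X}).
Hypothesis f_frac : forall x, exists s r, S s /\ f s * x = f r.

Lemma common_denominator x1 x2 :
  exists s r1 r2, [/\ S s, f s * x1 = f r1 & f s * x2 = f r2].
Proof.
have [s1 [r1 [Ss1 e1]]] := f_frac x1; have [s2 [r2 [Ss2 e2]]] := f_frac x2.
have [s' [r' [Ss' e3]]] := left_den_ore s1 Ss2.
exists (s' * s1), (s' * r1), (r' * r2); split; first exact: left_denM.
  by rewrite !rmorphM -mulrA e1.
by rewrite e3 !rmorphM -mulrA e2.
Qed.

End LeftDenominatorSet.

Section UniversalProperty.
Variables (R : nzRingType) (S : R -> Prop) (X Y : nzRingType).
Variables (f : {rmorphism R -> X}) (g : {rmorphism R -> Y}).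
Hypotheses (HS : left_den S) (f_frac : forall x, exists s r, S s /\ f s * x = f r).
Hypotheses (g_inv : forall s, S s -> invertible (g s))
  (ker_fg : forall r, f r = 0 -> g r = 0).

Definition same_fraction x y := exists s r, [/\ S s, f s * x = f r & g s * y = g r].

Lemma same_fraction_eq x y s r :
  same_fraction x y -> S s -> f s * x = f r -> g s * y = g r.
Proof.
move=> [s0 [r0 [Ss0 e1 e2]]] Ss e.
have [s' [r' [Ss' e3]]] := left_den_ore HS s0 Ss.
have f_eq : f (s' * r0 - r' * r) = 0.
  by rewrite rmorphB !rmorphM -e1 -e !mulrA -!rmorphM e3 subrr.
have := ker_fg f_eq; rewrite rmorphB !rmorphM -e2 mulrA -[g s' * g s0]rmorphM e3 rmorphM.
rewrite -mulrA => /eqP; rewrite subr_eq0 => /eqP /invertible_lcancel; apply.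
by apply: (invertibleMl (g_inv Ss)); rewrite -rmorphM -e3; apply: g_inv; apply: left_denM.
Qed.

Lemma same_fraction_uniq x y y' : same_fraction x y -> same_fraction x y' -> y = y'.
Proof.
move=> xy [s [r [Ss e1 e2]]].
by apply: (invertible_lcancel (g_inv Ss)); rewrite e2 (same_fraction_eq xy Ss e1).
Qed.

Lemma same_fraction_ex x : exists y, same_fraction x y.
Proof.
have [s [r [Ss e]]] := f_frac x; have [u [ug gu]] := g_inv Ss.
by exists (u * g r), s, r; split => //; rewrite mulrA gu mul1r.
Qed.

Lemma same_fractionB x1 y1 x2 y2 :
  same_fraction x1 y1 -> same_fraction x2 y2 -> same_fraction (x1 - x2) (y1 - y2).
Proof.
move=> xy1 xy2; have [s [r1 [r2 [Ss e1 e2]]]] := common_denominator HS f_frac x1 x2.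
exists s, (r1 - r2); split => //; first by rewrite mulrBr e1 e2 rmorphB.
by rewrite mulrBr (same_fraction_eq xy1 Ss e1) (same_fraction_eq xy2 Ss e2) rmorphB.
Qed.

Lemma same_fractionM x1 y1 x2 y2 :
  same_fraction x1 y1 -> same_fraction x2 y2 -> same_fraction (x1 * x2) (y1 * y2).
Proof.
move=> [s1 [r1 [Ss1 e1 e1']]] [s2 [r2 [Ss2 e2 e2']]].
have [s' [r' [Ss' e3]]] := left_den_ore HS r1 Ss2.
exists (s' * s1), (r' * r2); split; first exact: left_denM.
  by rewrite !rmorphM !mulrA -(mulrA (f s')) e1 -rmorphM e3 rmorphM -mulrA e2.
by rewrite !rmorphM !mulrA -(mulrA (g s')) e1' -rmorphM e3 rmorphM -mulrA e2'.
Qed.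

Lemma same_fraction_img r : same_fraction (f r) (g r).
Proof. by exists 1, r; rewrite !rmorph1 !mul1r; split => //; apply: left_den1. Qed.

Lemma localization_lift : exists phi : {rmorphism X -> Y}, forall r, phi (f r) = g r.
Proof.
pose phi0 x := proj1_sig (constructive_indefinite_description _ (same_fraction_ex x)).
have phi0P x : same_fraction x (phi0 x).
  by rewrite /phi0; case: constructive_indefinite_description.
have phi0B x y : phi0 (x - y) = phi0 x - phi0 y.
  exact: same_fraction_uniq (phi0P _) (same_fractionB (phi0P _) (phi0P _)).
have phi0M x y : phi0 (x * y) = phi0 x * phi0 y.
  exact: same_fraction_uniq (phi0P _) (same_fractionM (phi0P _) (phi0P _)).
have phi01 : phi0 1 = 1.
  by apply: same_fraction_uniq (phi0P _) _; rewrite -(rmorph1 f) -(rmorph1 g);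
     apply: same_fraction_img.
pose phi : {rmorphism X -> Y} :=
  HB.pack phi0 (GRing.isZmodMorphism.Build X Y phi0 phi0B)
    (GRing.isMonoidMorphism.Build X Y phi0 (conj phi01 phi0M)).
by exists phi => r; apply: same_fraction_uniq (phi0P _) (same_fraction_img r).
Qed.

End UniversalProperty.

Lemma lift_injective (R : nzRingType) (S : R -> Prop) (X Y : nzRingType)
    (f : {rmorphism R -> X}) (g : {rmorphism R -> Y}) (phi : {rmorphism X -> Y}) :
  (forall s, S s -> invertible (f s)) -> (forall x, exists s r, S s /\ f s * x = f r) ->
  (forall r, g r = 0 -> f r = 0) -> (forall r, phi (f r) = g r) -> injective phi.
Proof.
move=> f_inv f_frac ker_gf phiE; apply: raddf_inj => x phix0.
have [s [r [Ss e]]] := f_frac x.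
have : f r = 0 by apply: ker_gf; rewrite -phiE -e rmorphM phix0 mulr0.
by rewrite -e => fsx0; apply: (invertible_lcancel (f_inv s Ss)); rewrite fsx0 mulr0.
Qed.

Section PreimageOfUnits.
Variables (A Q : nzRingType) (h : {rmorphism A -> Q}).
Hypotheses (h_inj : injective h)
  (h_frac : forall q, exists b c, invertible (h b) /\ h b * q = h c).

Lemma preim_invertible_den : den_l_at (@zero_ideal A) (fun a => invertible (h a)).
Proof.
have h0 a : h a = 0 -> a = 0 by move=> ha0; apply: h_inj; rewrite ha0 rmorph0.
have W1 : invertible (h 1) by rewrite rmorph1; apply: invertible1.
split; first split.
- split=> //; split; first by rewrite rmorph0; apply: invertible0.
  by move=> a b; rewrite rmorphM; apply: invertibleM.
- move=> a w [v [vw wv]]; have [b [c [hb e]]] := h_frac (h a * v).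
  exists b, c; split => //; apply: h_inj.
  by rewrite !rmorphM -e -!mulrA vw mulr1.
- move=> a w [v [vw wv]] aw0; exists 1; split => //; rewrite mul1r; apply: h0.
  by rewrite -[h a]mulr1 -wv mulrA -rmorphM aw0 rmorph0 mul0r.
- move=> a; split; last by move=> ->; exists 1; rewrite mulr0.
  move=> [w [hw wa0]]; apply: h0; apply: (invertible_lcancel hw).
  by rewrite -rmorphM wa0 rmorph0 mulr0.
Qed.

Lemma rmorph_fraction_bijective :
  (forall a, invertible (h a) -> invertible a) -> bijective h.
Proof.
move=> inv_h; apply: inj_surj_bijective => // q.
have [b [c [hb e]]] := h_frac q; have [u [ub bu]] := inv_h b hb.
by exists (u * c); rewrite rmorphM -e mulrA -rmorphM ub rmorph1 mul1r.
Qed.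

End PreimageOfUnits.

Lemma invertible_den (A : nzRingType) : den_l_at (@zero_ideal A) (@invertible A).
Proof.
apply: (@preim_invertible_den A A idfun) => // q.
by exists 1, q; rewrite mul1r; split => //; apply: invertible1.
Qed.

Lemma localization_bijectiveP (A B : nzRingType) (U : A -> Prop)
    (rho : {rmorphism A -> B}) :
  left_localization U rho -> (forall a, ass U a -> a = 0) ->
  bijective rho <-> (forall u, U u -> invertible u).
Proof.
move=> [rho_inv rho_frac rho_ker] U_ass0; split.
  by move=> rho_bij u Uu; apply: bij_rmorph_invertible rho_bij (rho_inv u Uu).
move=> U_inv; apply: inj_surj_bijective.
  by apply: raddf_inj => a /rho_ker; apply: U_ass0.
move=> b; have [u [a [Uu e]]] := rho_frac b; have [v [vu uv]] := U_inv u Uu.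
by exists (v * a); rewrite rmorphM -e mulrA -rmorphM vu rmorph1 mul1r.
Qed.

Section PreimageDenominatorSet.
Variables (R A : nzRingType) (S : R -> Prop) (sigma : {rmorphism R -> A}).
Variable U : A -> Prop.
Hypotheses (HS : left_den S)
  (sigma_frac : forall x, exists s r, S s /\ sigma s * x = sigma r)
  (sigma_ker : forall r, sigma r = 0 <-> ass S r)
  (HU : den_l_at (@zero_ideal A) U) (SU : forall s, S s -> U (sigma s)).

Let U_den : left_den U := HU.1.
Let U_ass0 a : ass U a -> a = 0 := proj1 (HU.2 a).

Lemma preim_den_ore r v : U (sigma v) ->
  exists v' r', U (sigma v') /\ v' * r = r' * v.
Proof.
move=> Uv; have [u [a [Uu e]]] := left_den_ore U_den (sigma r) Uv.
have [s [p [q [Ss ep eq]]]] := common_denominator HS sigma_frac u a.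
have : sigma (p * r - q * v) = 0 by rewrite rmorphB !rmorphM -ep -eq -!mulrA e subrr.
move/sigma_ker => [s0 [Ss0 e0]]; exists (s0 * p), (s0 * q); split.
  by rewrite rmorphM -ep; apply: (left_denM U_den) (left_denM U_den _ Uu); apply: SU.
by apply/eqP; rewrite -subr_eq0 -!mulrA -mulrBr e0.
Qed.

Lemma preim_den : den_l_at (ass S) (fun r => U (sigma r)).
Proof.
have sigma_ass r v : U (sigma v) -> v * r = 0 -> ass S r.
  move=> Uv vr0; apply/sigma_ker/U_ass0; exists (sigma v); split => //.
  by rewrite -rmorphM vr0 rmorph0.
split; first split.
- split; first by rewrite rmorph1; apply: left_den1.
  split; first by rewrite rmorph0; apply: left_den_neq0.
  by move=> a b; rewrite rmorphM; apply: left_denM.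
- exact: preim_den_ore.
- move=> r v Uv rv0; have [s [Ss sr0]] : ass S r.
    apply/sigma_ker/U_ass0/(left_den_ass U_den Uv).
    by rewrite -rmorphM rv0 rmorph0.
  by exists s; split => //; apply: SU.
- move=> r; split; first by move=> [v [Uv vr0]]; apply: sigma_ass vr0.
  by move=> [s [Ss sr0]]; exists s; split => //; apply: SU.
Qed.

End PreimageDenominatorSet.

Theorem theorem3p10
    (R : nzRingType) (S : R -> Prop) (HS : left_den S)
    (* T = S_a(R) for a = ass(S) *)
    (T : R -> Prop) (HT : largest_den (ass S) T)
    (* A = S^{-1}R *)
    (A : nzRingType) (sigma : {rmorphism R -> A})
    (Hsigma : left_localization S sigma)
    (* Q = Q_a(R) = S_a(R)^{-1}R *)
    (Q : nzRingType) (tau : {rmorphism R -> Q})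
    (Htau : left_localization T tau)
    (* U = S_0(A), B = Q_l(A) = S_0(A)^{-1}A, rho the natural map A -> Q_l(A) *)
    (U : A -> Prop) (HU : largest_den (@zero_ideal A) U)
    (B : nzRingType) (rho : {rmorphism A -> B})
    (Hrho : left_localization U rho) :
  (exists phi : {rmorphism A -> Q},
      (forall r, phi (sigma r) = tau r) /\ bijective phi)
  <-> bijective rho.
Proof.
case: HT => [[_ T_ass] T_max]; case: Hsigma => [sigma_inv sigma_frac sigma_ker].
case: Htau => [tau_inv tau_frac tau_ker]; case: HU => [U_den U_max].
have U_ass0 a : ass U a -> a = 0 := proj1 (U_den.2 a).
have inv_U a : invertible a -> U a := U_max _ (invertible_den A) a.
rewrite (localization_bijectiveP Hrho U_ass0); split.
- move=> [phi [phiE phi_bij]] u Uu; have [s [r [Ss e]]] := sigma_frac u.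
  have SU s' : S s' -> U (sigma s') by move/sigma_inv/inv_U.
  have Tr : T r.
    apply: T_max (preim_den HS sigma_frac sigma_ker U_den SU) _ _.
    by rewrite -e; apply: (left_denM U_den.1) Uu; apply: SU.
  apply: (invertibleMr (sigma_inv s Ss)); rewrite e.
  by apply: (bij_rmorph_invertible phi_bij); rewrite phiE; apply: tau_inv.
- move=> U_inv.
  have ST s : S s -> T s := T_max S (conj HS (fun r => iff_refl _)) s.
  have ker_eq r : sigma r = 0 <-> tau r = 0.
    by rewrite sigma_ker tau_ker T_ass.
  have [phi phiE] := localization_lift HS sigma_frac
    (fun s Ss => tau_inv s (ST s Ss)) (fun r => proj1 (ker_eq r)).
  have phi_inj := lift_injective sigma_inv sigma_frac (fun r => proj2 (ker_eq r)) phiE.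
  have phi_frac q : exists b c, invertible (phi b) /\ phi b * q = phi c.
    have [t [r [Tt e]]] := tau_frac q.
    by exists (sigma t), (sigma r); rewrite !phiE; split => //; apply: tau_inv.
  have W_den := preim_invertible_den phi_inj phi_frac.
  exists phi; split => //; apply: rmorph_fraction_bijective phi_inj phi_frac _.
  by move=> a /(U_max _ W_den); apply: U_inv.
Qed.
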